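(* For any total budget $\mathrm{TB}\in\mathbb N_0$, if $G$ and $H$ are numbers, then $G+H$ is a number.
   Context: Game forms are defined recursively: $G=\{G^{\mathcal L}\mid G^{\mathcal R}\}$ with finite sets of Left and Right options, and finite birthday. The budget set for total budget $\mathrm{TB}$ is $\mathcal B=\{0,\dots,\mathrm{TB},\hat 0,\dots,\widehat{\mathrm{TB}}\}$: state $p$ (resp. $\hat p$) means Left holds $p$ dollars and Right holds $\mathrm{TB}-p$, and Right (resp. Left) holds the tie-breaking marker. Play of $(G,\tilde p)$: at every position (terminal ones included) both players bid simultaneously, Left $\ell\in\{0,\dots,p\}$, Right $r\in\{0,\dots,\mathrm{TB}-p\}$. If Left holds the marker (state $\hat p$): if $\ell>r$ Left moves to $(G^L,\widehat{p-\ell})$, or, including the marker (allowed when $\ell\ge r$), to $(G^L,p-\ell)$; if $\ell=r$ Left wins, the marker passes to Right, play continues at $(G^L,p-\ell)$; if $\ell<r$ Right moves to $(G^R,\widehat{p+r})$. Symmetrically when Right holds the marker (state $p$): if $r>\ell$ Right moves to $(G^R,p+r)$ or, including the marker, to $(G^R,\widehat{p+r})$; if $r=\ell$ Right wins, the marker passes to Left, play continues at $(G^R,\widehat{p+r})$; if $r<\ell$ Left moves to $(G^L,p-\ell)$. A player who wins a bid but has no option loses. $o(G,\tilde p)\in\{\mathrm L,\mathrm R\}$ is the winner under optimal play; $\mathrm L>\mathrm R$. Disjunctive sum $G+H=\{G^{\mathcal L}+H,G+H^{\mathcal L}\mid G^{\mathcal R}+H,G+H^{\mathcal R}\}$. $G\ge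 H$ means $o(G+X,\tilde p)\ge o(H+X,\tilde p)$ for all game forms $X$ and all $\tilde p\in\mathcal B$; $G>H$ means $G\ge H$ and not $H\ge G$; $G<H$ means $H>G$. A game form $G$ is a number if all its options are numbers and $G^L<G<G^R$ for all $G^L\in G^{\mathcal L}$, $G^R\in G^{\mathcal R}$. *)

From mathcomp Require Import all_boot.
From Stdlib Require List.

Set Implicit Arguments.
Unset Strict Implicit.
Unset Printing Implicit Defensive.

(* Game forms: finite lists of Left and Right options (finite birthday is
   automatic since the type is inductive). *)
Inductive game : Type := Game : seq game -> seq game -> game.

Definition leftOpts (G : game) : seq game := let: Game GL _ := G in GL.
Definition rightOpts (G : game) : seq game := let: Game _ GR := G in GR.

(* Budget states: (p, hat).  hat = true  : state \hat p (Left holds the marker);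
                             hat = false : state p      (Right holds the marker).
   Left holds p dollars, Right holds TB - p; valid iff p <= TB. *)

(* A player winning a bid without an available option loses
   (has over [::] is false, all over [::] is true). *)
Fixpoint lwins (TB : nat) (G : game) (p : nat) (hat : bool) {struct G} : bool :=
  match G with
  | Game GL GR =>
    has (fun l =>
      all (fun r =>
        if hat then
          if r < l then
            has (fun g => lwins TB g (p - l) true || lwins TB g (p - l) false) GL
          else if l == r then
            has (fun g => lwins TB g (p - l) false) GL
          else
            all (fun g => lwins TB g (p + r) true) GR
        else
          if l < r then
            all (fun g => lwins TB g (p + r) false && lwins TB g (p + r) true) GR
          else if l == r then
            all (fun g => lwins TB g (p + r) true) GR
          else
            has (fun g => lwins TB g (p - l) false) GL)
      (iota 0 (TB - p).+1))
    (iota 0 p.+1)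
  end.

(* Outcome: true = L, false = R (so L > R corresponds to true > false). *)
Definition outcome (TB : nat) (G : game) (p : nat) (hat : bool) : bool :=
  lwins TB G p hat.

Fixpoint gadd (G H : game) {struct G} : game :=
  match G with
  | Game GL GR =>
    let fix addG (H : game) : game :=
      match H with
      | Game HL HR =>
        Game ([seq gadd g H | g <- GL] ++ [seq addG h | h <- HL])
             ([seq gadd g H | g <- GR] ++ [seq addG h | h <- HR])
      end
    in addG H
  end.

Definition gge (TB : nat) (G H : game) : Prop :=
  forall (X : game) (p : nat) (hat : bool), p <= TB ->
    outcome TB (gadd H X) p hat -> outcome TB (gadd G X) p hat.

Definition ggt (TB : nat) (G H : game) : Prop := gge TB G H /\ ~ gge TB H G.
Definition glt (TB : nat) (G H : game) : Prop := ggt TB H G.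

Inductive is_number (TB : nat) : game -> Prop :=
  | NumberI (GL GR : seq game) :
      (forall g, List.In g GL -> is_number TB g) ->
      (forall g, List.In g GR -> is_number TB g) ->
      (forall g, List.In g GL -> glt TB g (Game GL GR)) ->
      (forall g, List.In g GR -> glt TB (Game GL GR) g) ->
      is_number TB (Game GL GR).

(* For a number H the game H - H acts as zero: (H - H) + X and X have the
   same outcome from every budget state.  Left transfers a winning strategy from X by bidding
   exactly as in X; when Right moves in the component H - H, say to H - h with h a Left option
   of H, Left bids 0 and, winning the tie with the marker, reverts to h - h + X, while any
   Right move away from it only improves Left's position because H^L <= H <= H^R.  When Right
   wins a bid he pays Left, so these arguments go by downward induction on Left's budget; the
   dual statement for Right goes by upward induction.  Consequently A + H >= B + H implies
   A >= B, so G^L < G yields G^L + H < G + H, and likewise for the other options of G + H. *)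
From HB Require Import structures.
From mathcomp Require Import all_boot zify.

Set Implicit Arguments.
Unset Strict Implicit.
Unset Printing Implicit Defensive.

Lemma InP (T : eqType) (x : T) s : reflect (List.In x s) (x \in s).
Proof.
elim: s => [|y s IH]; first by right.
rewrite in_cons; apply: (iffP orP) => [[/eqP->|/IH]|[->|/IH]]; by [left|right].
Qed.

Lemma sub_in_has (T : eqType) (a1 a2 : pred T) s :
  {in s, forall x, a1 x -> a2 x} -> has a1 s -> has a2 s.
Proof. by move=> a12 /hasP[x xs a1x]; apply/hasP; exists x; last exact: a12. Qed.

Lemma sub_in_all (T : eqType) (a1 a2 : pred T) s :
  {in s, forall x, a1 x -> a2 x} -> all a1 s -> all a2 s.
Proof. by move=> a12 /allP a1s; apply/allP => x xs; apply/a12/a1s. Qed.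

Lemma ltn_ind_down (n : nat) (P : nat -> Prop) :
  (forall q, q <= n -> (forall q', q < q' <= n -> P q') -> P q) -> forall q, q <= n -> P q.
Proof.
move=> IH q le_q; move En: (n - q) => m.
elim/ltn_ind: m q le_q En => m IHm q le_q En.
by apply: IH => // q' /andP[lt_qq' le_q']; apply: (IHm (n - q')); lia.
Qed.

Definition matched (T : eqType) (R : rel T) (s t : seq T) : bool :=
  all (fun x => has (R x) t) s && all (fun y => has (R^~ y) s) t.

Section Matched.
Variable T : eqType.

Lemma matched_map (U : eqType) (R : rel T) (R' : rel U) (f g : T -> U) s t :
  matched R s t -> {in s & t, forall x y, R x y -> R' (f x) (g y)} ->
  matched R' (map f s) (map g t).
Proof.
move=> /andP[/allP st /allP ts] fg; apply/andP; split; apply/allP => _ /mapP[x xin ->].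
- by have /hasP[y yin xy] := st x xin; apply/hasP; exists (g y); [exact: map_f | exact: fg].
- by have /hasP[y yin xy] := ts x xin; apply/hasP; exists (f y); [exact: map_f | exact: fg].
Qed.

Lemma matched_map_self (U : eqType) (R : rel T) (f g : U -> T) s :
  {in s, forall x, R (f x) (g x)} -> matched R (map f s) (map g s).
Proof.
move=> fg; apply/andP; split; apply/allP => _ /mapP[x xin ->]; apply/hasP.
- by exists (g x); [exact: map_f | exact: fg].
- by exists (f x); [exact: map_f | exact: fg].
Qed.

Lemma matched_cat (R : rel T) s1 s2 t1 t2 :
  matched R s1 t1 -> matched R s2 t2 -> matched R (s1 ++ s2) (t1 ++ t2).
Proof.
move=> /andP[/allP st1 /allP ts1] /andP[/allP st2 /allP ts2].
apply/andP; split; rewrite all_cat; apply/andP; split; apply/allP => x xin; rewrite has_cat.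
- by rewrite st1.
- by rewrite st2 ?orbT.
- by rewrite ts1.
- by rewrite ts2 ?orbT.
Qed.

Lemma matched_perml (R : rel T) s s' t : perm_eq s s' -> matched R s t = matched R s' t.
Proof.
move=> /perm_mem ss'; rewrite /matched (eq_all_r ss'); congr andb.
by apply: eq_all => y; apply: eq_has_r.
Qed.

Lemma matched_catC (R : rel T) s1 s2 t1 t2 :
  matched R s1 t2 -> matched R s2 t1 -> matched R (s1 ++ s2) (t1 ++ t2).
Proof.
by move=> st2 st1; rewrite (matched_perml R _ (permEl (perm_catC s1 s2))) matched_cat.
Qed.

Lemma matched_has (R : rel T) (P : pred T) s t :
  matched R s t -> {in s, forall x y, R x y -> P x = P y} -> has P s = has P t.
Proof.
move=> /andP[/allP st /allP ts] eqP; apply/hasP/hasP => [[x xs Px] | [y yt Py]].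
- by have /hasP[y yt xy] := st x xs; exists y; rewrite // -(eqP x xs y).
- by have /hasP[x xs xy] := ts y yt; exists x; rewrite // (eqP x xs y).
Qed.

Lemma matched_all (R : rel T) (P : pred T) s t :
  matched R s t -> {in s, forall x y, R x y -> P x = P y} -> all P s = all P t.
Proof.
move=> st eqP; apply: negb_inj; rewrite -!has_predC.
by apply: matched_has st _ => x xs y xy /=; rewrite (eqP x xs y).
Qed.

End Matched.

Fixpoint game_ind_In (P : game -> Prop)
    (IH : forall GL GR, (forall g, List.In g GL -> P g) ->
                        (forall g, List.In g GR -> P g) -> P (Game GL GR))
    (G : game) : P G :=
  let fix opts (s : seq game) : forall g, List.In g s -> P g :=
    match s with
    | [::] => fun g (gs : List.In g [::]) => match gs with end
    | x :: s' => fun g gs => match gs with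
                             | or_introl e => eq_ind x P (game_ind_In IH x) g e
                             | or_intror gs' => opts s' g gs'
                             end
    end in
  let: Game GL GR := G in IH GL GR (opts GL) (opts GR).

(* Encoding games as generic trees gives them decidable equality, so that options can be
   handled with [\in] and the seq library. *)
Fixpoint tree_of_game (G : game) : GenTree.tree unit :=
  let: Game GL GR := G in
  GenTree.Node 0 [:: GenTree.Node 0 (map tree_of_game GL);
                     GenTree.Node 0 (map tree_of_game GR)].

Fixpoint game_of_tree (t : GenTree.tree unit) : game :=
  if t is GenTree.Node _ [:: GenTree.Node _ tL; GenTree.Node _ tR]
  then Game (map game_of_tree tL) (map game_of_tree tR) else Game [::] [::].

Lemma tree_of_gameK : cancel tree_of_game game_of_tree.
Proof.
elim/game_ind_In => GL GR IHL IHR /=.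
have mapK s : (forall g, List.In g s -> game_of_tree (tree_of_game g) = g) ->
    map game_of_tree (map tree_of_game s) = s.
  by elim: s => //= g s IH gsK; rewrite gsK ?IH; auto.
by rewrite !mapK.
Qed.

HB.instance Definition _ := Equality.copy game (can_type tree_of_gameK).

Lemma game_mem_ind (P : game -> Prop) :
  (forall G, {in leftOpts G, forall g, P g} -> {in rightOpts G, forall g, P g} -> P G) ->
  forall G, P G.
Proof. by move=> IH; elim/game_ind_In => GL GR IHL IHR; apply: IH => g /InP; auto. Qed.

Lemma leftOpts_gadd A B :
  leftOpts (gadd A B) = [seq gadd a B | a <- leftOpts A] ++ [seq gadd A b | b <- leftOpts B].
Proof. by case: A; case: B. Qed.

Lemma rightOpts_gadd A B :
  rightOpts (gadd A B) = [seq gadd a B | a <- rightOpts A] ++ [seq gadd A b | b <- rightOpts B].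
Proof. by case: A; case: B. Qed.

Lemma game_eta G : G = Game (leftOpts G) (rightOpts G).
Proof. by case: G. Qed.

Lemma gadd_assoc A B C : gadd (gadd A B) C = gadd A (gadd B C).
Proof.
elim/game_mem_ind: A B C => A IHAL IHAR B; elim/game_mem_ind: B => B IHBL IHBR C.
elim/game_mem_ind: C => C IHCL IHCR.
rewrite [LHS]game_eta [RHS]game_eta !leftOpts_gadd !rightOpts_gadd !map_cat -!map_comp -!catA.
by congr (Game (_ ++ _ ++ _) (_ ++ _ ++ _)); apply/eq_in_map => x /= xin; auto.
Qed.

(* [gadd] is commutative only up to the order (and multiplicity) of options; [bisim] identifies
   games whose options correspond recursively in this sense. *)
Fixpoint bisim (G H : game) : bool :=
  let: Game GL GR := G in matched bisim GL (leftOpts H) && matched bisim GR (rightOpts H).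

Lemma bisimE G H :
  bisim G H =
  matched bisim (leftOpts G) (leftOpts H) && matched bisim (rightOpts G) (rightOpts H).
Proof. by case: G. Qed.

Lemma bisim_refl G : bisim G G.
Proof.
elim/game_mem_ind: G => G IHL IHR.
by rewrite bisimE -[leftOpts G]map_id -[rightOpts G]map_id !matched_map_self.
Qed.

Lemma bisim_addC A B : bisim (gadd A B) (gadd B A).
Proof.
elim/game_mem_ind: A B => A IHAL IHAR B; elim/game_mem_ind: B => B IHBL IHBR.
rewrite bisimE !leftOpts_gadd !rightOpts_gadd.
by rewrite !matched_catC ?matched_map_self // => x xin; auto.
Qed.

Lemma bisim_add A A' B B' : bisim A A' -> bisim B B' -> bisim (gadd A B) (gadd A' B').
Proof.
elim/game_mem_ind: A A' B B' => A IHAL IHAR A' B.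
elim/game_mem_ind: B => B IHBL IHBR B' AA' BB'.
move: (AA') (BB'); rewrite !bisimE !leftOpts_gadd !rightOpts_gadd => /andP[AL AR] /andP[BL BR].
by apply/andP; split; apply: matched_cat;
  [apply: (matched_map AL) | apply: (matched_map BL) | apply: (matched_map AR)
  | apply: (matched_map BR)]; move=> x y xin yin xy; auto.
Qed.

Fixpoint gneg (G : game) : game :=
  let: Game GL GR := G in Game [seq gneg g | g <- GR] [seq gneg g | g <- GL].

Lemma leftOpts_gneg G : leftOpts (gneg G) = map gneg (rightOpts G).
Proof. by case: G. Qed.

Lemma rightOpts_gneg G : rightOpts (gneg G) = map gneg (leftOpts G).
Proof. by case: G. Qed.

Definition gsub_add (A B X : game) : game := gadd (gadd A (gneg B)) X.

Lemma leftOpts_gsub_add A B X :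
  leftOpts (gsub_add A B X) =
  [seq gsub_add a B X | a <- leftOpts A] ++ [seq gsub_add A b X | b <- rightOpts B] ++
  [seq gsub_add A B x | x <- leftOpts X].
Proof. by rewrite /gsub_add !leftOpts_gadd leftOpts_gneg !map_cat -catA -!map_comp. Qed.

Lemma rightOpts_gsub_add A B X :
  rightOpts (gsub_add A B X) =
  [seq gsub_add a B X | a <- rightOpts A] ++ [seq gsub_add A b X | b <- leftOpts B] ++
  [seq gsub_add A B x | x <- rightOpts X].
Proof. by rewrite /gsub_add !rightOpts_gadd rightOpts_gneg !map_cat -catA -!map_comp. Qed.

Lemma has_leftOpts_gsub_add (P Q : pred game) A B X :
  {in leftOpts X, forall x, P x -> Q (gsub_add A B x)} ->
  has P (leftOpts X) -> has Q (leftOpts (gsub_add A B X)).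
Proof.
move=> PQ /hasP[x xin Px]; apply/hasP; exists (gsub_add A B x); last exact: PQ.
by rewrite leftOpts_gsub_add !mem_cat map_f ?orbT.
Qed.

Lemma notall_rightOpts_gsub_add (P Q : pred game) A B X :
  {in rightOpts X, forall x, ~~ P x -> ~~ Q (gsub_add A B x)} ->
  ~~ all P (rightOpts X) -> ~~ all Q (rightOpts (gsub_add A B X)).
Proof.
rewrite -!has_predC => PQ /hasP[x xin Px]; apply/hasP; exists (gsub_add A B x); last exact: PQ.
by rewrite rightOpts_gsub_add !mem_cat map_f ?orbT.
Qed.

Lemma all_rightOpts_gsub_add (P : pred game) A B X :
  {in rightOpts A, forall a, P (gsub_add a B X)} ->
  {in leftOpts B, forall b, P (gsub_add A b X)} ->
  {in rightOpts X, forall x, P (gsub_add A B x)} -> all P (rightOpts (gsub_add A B X)).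
Proof.
by move=> PA PB PX; rewrite rightOpts_gsub_add !all_cat !all_map; apply/and3P; split; apply/allP.
Qed.

Lemma hasN_leftOpts_gsub_add (P : pred game) A B X :
  {in leftOpts A, forall a, ~~ P (gsub_add a B X)} ->
  {in rightOpts B, forall b, ~~ P (gsub_add A b X)} ->
  {in leftOpts X, forall x, ~~ P (gsub_add A B x)} -> ~~ has P (leftOpts (gsub_add A B X)).
Proof.
move=> PA PB PX; rewrite leftOpts_gsub_add !has_cat !has_map !negb_or.
by apply/and3P; split; rewrite -all_predC; apply/allP.
Qed.

Section Bidding.
Variable TB : nat.

Definition bid_result (GL GR : seq game) (p : nat) (hat : bool) (l r : nat) : bool :=
  if hat then
    if r < l then has (fun g => lwins TB g (p - l) true || lwins TB g (p - l) false) GL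
    else if l == r then has (fun g => lwins TB g (p - l) false) GL
    else all (fun g => lwins TB g (p + r) true) GR
  else
    if l < r then all (fun g => lwins TB g (p + r) false && lwins TB g (p + r) true) GR
    else if l == r then all (fun g => lwins TB g (p + r) true) GR
    else has (fun g => lwins TB g (p - l) false) GL.

Lemma lwinsE G p hat :
  lwins TB G p hat =
  has (fun l => all (bid_result (leftOpts G) (rightOpts G) p hat l) (iota 0 (TB - p).+1))
      (iota 0 p.+1).
Proof. by case: G. Qed.

Lemma lwinsP G p hat :
  reflect (exists2 l, l <= p &
             forall r, r <= TB - p -> bid_result (leftOpts G) (rightOpts G) p hat l r)
          (lwins TB G p hat).
Proof.
rewrite lwinsE; apply: (iffP hasP) => [[l] | [l le_lp win]].
- rewrite mem_iota => le_lp /allP win.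
  by exists l => [|r le_r]; [|apply: win; rewrite mem_iota]; lia.
- by exists l; [rewrite mem_iota | apply/allP => r; rewrite mem_iota => le_r; apply: win]; lia.
Qed.

Lemma lwinsNP G p hat :
  reflect (forall l, l <= p ->
             exists2 r, r <= TB - p & ~~ bid_result (leftOpts G) (rightOpts G) p hat l r)
          (~~ lwins TB G p hat).
Proof.
apply: (iffP idP) => [lose l le_lp | lose]; last first.
  by apply/lwinsP => -[l /lose[r le_r /negP nwin] win]; apply/nwin/win.
have : ~~ all (bid_result (leftOpts G) (rightOpts G) p hat l) (iota 0 (TB - p).+1).
  by apply: contra lose => win; rewrite lwinsE; apply/hasP; exists l; rewrite ?mem_iota; lia.
by rewrite -has_predC => /hasP[r]; rewrite mem_iota => le_r nwin; exists r => //; lia.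
Qed.

Section Bids.
Variables (GL GR : seq game) (p l r : nat).

Lemma bid_resultT_Lwin : r < l ->
  bid_result GL GR p true l r =
  has (fun g => lwins TB g (p - l) true || lwins TB g (p - l) false) GL.
Proof. by rewrite /bid_result => ->. Qed.

Lemma bid_resultT_tie : l = r ->
  bid_result GL GR p true l r = has (fun g => lwins TB g (p - l) false) GL.
Proof. by move=> <-; rewrite /bid_result ltnn eqxx. Qed.

Lemma bid_resultT_Rwin : l < r ->
  bid_result GL GR p true l r = all (fun g => lwins TB g (p + r) true) GR.
Proof. by move=> lt_lr; rewrite /bid_result ltnNge ltnW //= ltn_eqF. Qed.

Lemma bid_resultF_Rwin : l < r ->
  bid_result GL GR p false l r =
  all (fun g => lwins TB g (p + r) false && lwins TB g (p + r) true) GR.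
Proof. by rewrite /bid_result => ->. Qed.

Lemma bid_resultF_tie : l = r ->
  bid_result GL GR p false l r = all (fun g => lwins TB g (p + r) true) GR.
Proof. by move=> ->; rewrite /bid_result ltnn eqxx. Qed.

Lemma bid_resultF_Lwin : r < l ->
  bid_result GL GR p false l r = has (fun g => lwins TB g (p - l) false) GL.
Proof. by move=> lt_rl; rewrite /bid_result ltnNge ltnW //= gtn_eqF. Qed.

End Bids.

Lemma lwins_mono G p p' hat : p <= p' <= TB -> lwins TB G p hat -> lwins TB G p' hat.
Proof.
elim/game_mem_ind: G p p' hat => G IHL IHR p p' hat /andP[le_pp' le_p'] /lwinsP[l le_lp win].
apply/lwinsP; exists l => [|r le_r]; first lia.
have monoL : {in leftOpts G, forall g b, lwins TB g (p - l) b -> lwins TB g (p' - l) b}.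
  by move=> g gin b; apply: IHL; lia.
have monoR : {in rightOpts G, forall g b, lwins TB g (p + r) b -> lwins TB g (p' + r) b}.
  by move=> g gin b; apply: IHR; lia.
move: win => /(_ r ltac:(lia)); rewrite /bid_result.
case: hat; case: ifP => _; try case: ifP => _.
- by apply: sub_in_has => g gin /orP[] /(monoL g gin) ->; rewrite ?orbT.
- by apply: sub_in_has => g gin /(monoL g gin).
- by apply: sub_in_all => g gin /(monoR g gin).
- by apply: sub_in_all => g gin /andP[/(monoR g gin) -> /(monoR g gin) ->].
- by apply: sub_in_all => g gin /(monoR g gin).
- by apply: sub_in_has => g gin /(monoL g gin).
Qed.

Lemma lwins_raise G p r hat : p <= TB -> r <= TB - p -> lwins TB G p hat -> lwins TB G (p + r) hat.
Proof. by move=> le_p le_r; apply: lwins_mono; lia. Qed.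

Lemma lwinsN_lower G p l hat : p <= TB -> ~~ lwins TB G p hat -> ~~ lwins TB G (p - l) hat.
Proof. by move=> le_p; apply: contra; apply: lwins_mono; lia. Qed.

Lemma lwins_bisim G G' p hat : bisim G G' -> lwins TB G p hat = lwins TB G' p hat.
Proof.
elim/game_mem_ind: G G' p hat => G IHL IHR G' p hat; rewrite bisimE => /andP[mL mR].
rewrite !lwinsE; apply: eq_has => l; apply: eq_all => r; rewrite /bid_result.
case: hat; case: ifP => _; try case: ifP => _.
all: first [apply: (matched_has mL) | apply: (matched_all mR)] => x xin y xy.
all: by rewrite ?(IHL x xin y _ _ xy) ?(IHR x xin y _ _ xy).
Qed.

End Bidding.

Section SelfCancellation.
Variable TB : nat.

Lemma gge_gsub_add A A' B X p hat : gge TB A A' -> p <= TB ->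
  lwins TB (gsub_add A' B X) p hat -> lwins TB (gsub_add A B X) p hat.
Proof. by rewrite /gsub_add !gadd_assoc => geA le_p; apply: geA. Qed.

Lemma ggeN_gsub_add A A' B X p hat : gge TB A A' -> p <= TB ->
  ~~ lwins TB (gsub_add A B X) p hat -> ~~ lwins TB (gsub_add A' B X) p hat.
Proof. by move=> geA le_p; apply: contra; apply: gge_gsub_add. Qed.

Definition keeps_lwins H X :=
  forall p hat, p <= TB -> lwins TB X p hat -> lwins TB (gsub_add H H X) p hat.

Definition keeps_lwinsN H X :=
  forall p hat, p <= TB -> ~~ lwins TB X p hat -> ~~ lwins TB (gsub_add H H X) p hat.

Definition lstable X q := lwins TB X q false && all (fun x => lwins TB x q true) (rightOpts X).

Definition rstable X q := ~~ lwins TB X q true && all (fun x => ~~ lwins TB x q false) (leftOpts X).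

(* In H - h + X, reached when Right has just moved -H to -h, Left holding the marker wins by
   bidding 0 and, on a tie, reverting to h - h + X; [lstable X q] is what this needs of X.
   [revertsR] is the dual statement for Right. *)
Definition revertsL H h :=
  forall X q, q <= TB -> lstable X q -> lwins TB (gsub_add H h X) q true.

Definition revertsR H k :=
  forall X q, q <= TB -> rstable X q -> ~~ lwins TB (gsub_add H k X) q false.

(* Proved by induction on the number H, each field for H using all four for its options. *)
Record self_cancelling H : Prop := SelfCancelling {
  sc_keeps_lwins : forall X, keeps_lwins H X;
  sc_keeps_lwinsN : forall X, keeps_lwinsN H X;
  sc_revertsL : {in leftOpts H, forall h, revertsL H h};
  sc_revertsR : {in rightOpts H, forall k, revertsR H k} }.

Lemma lstable_raise X q r : q <= TB -> r <= TB - q -> lstable X q -> lstable X (q + r).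
Proof.
move=> le_q le_r /andP[wX /allP wXR]; rewrite /lstable lwins_raise //=.
by apply/allP => x xin; apply: lwins_raise; rewrite ?wXR.
Qed.

Lemma rstable_lower X q l : q <= TB -> rstable X q -> rstable X (q - l).
Proof.
move=> le_q /andP[nwX /allP nwXL]; rewrite /rstable lwinsN_lower //=.
by apply/allP => x xin; apply: lwinsN_lower; rewrite ?nwXL.
Qed.

Section Step.
Variable H : game.
Hypothesis H_geL : {in leftOpts H, forall h, gge TB H h}.
Hypothesis H_leR : {in rightOpts H, forall k, gge TB k H}.
Hypothesis L_geLL : {in leftOpts H, forall h, {in leftOpts h, forall h', gge TB h h'}}.
Hypothesis R_leRR : {in rightOpts H, forall k, {in rightOpts k, forall k', gge TB k' k}}.
Hypothesis scL : {in leftOpts H, forall h, self_cancelling h}.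
Hypothesis scR : {in rightOpts H, forall k, self_cancelling k}.

Lemma revertsL_leftOpt h : h \in leftOpts H -> revertsL H h.
Proof.
move=> hL X; apply: ltn_ind_down => q le_q IH stX.
have [wX /allP wXR] := andP stX.
apply/lwinsP; exists 0 => // r le_r.
have [->|r_gt0] := posnP r.
  rewrite bid_resultT_tie // subn0; apply/hasP; exists (gsub_add h h X).
    by rewrite leftOpts_gsub_add mem_cat (map_f (fun a => gsub_add a h X)).
  exact: (sc_keeps_lwins (scL hL)).
rewrite bid_resultT_Rwin //; apply: all_rightOpts_gsub_add => x xin /=.
- apply: gge_gsub_add (H_leR xin) _ _; first lia.
  by apply: IH; [lia | exact: lstable_raise].
- apply: gge_gsub_add (H_geL hL) _ _; first lia.
  by apply: (sc_revertsL (scL hL)) => //; [lia | exact: lstable_raise].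
- apply: gge_gsub_add (H_geL hL) _ _; first lia.
  by apply: (sc_keeps_lwins (scL hL)); [lia | apply: lwins_raise; rewrite ?wXR].
Qed.

Lemma lwins_revert_rightOpt k X :
  k \in rightOpts H -> {in rightOpts X, forall x, keeps_lwins H x} ->
  forall q, q <= TB -> lstable X q -> lwins TB (gsub_add k H X) q true.
Proof.
move=> kR keepXR; apply: ltn_ind_down => q le_q IH stX.
have [wX /allP wXR] := andP stX.
apply/lwinsP; exists 0 => // r le_r.
have [->|r_gt0] := posnP r.
  rewrite bid_resultT_tie // subn0; apply/hasP; exists (gsub_add k k X).
    by rewrite leftOpts_gsub_add !mem_cat (map_f (fun b => gsub_add k b X)) ?orbT.
  exact: (sc_keeps_lwins (scR kR)).
rewrite bid_resultT_Rwin //; apply: all_rightOpts_gsub_add => x xin /=.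
- apply: gge_gsub_add (R_leRR kR xin) _ _; first lia.
  by apply: IH; [lia | exact: lstable_raise].
- apply: gge_gsub_add (H_leR kR) _ _; first lia.
  by apply: revertsL_leftOpt => //; [lia | exact: lstable_raise].
- apply: gge_gsub_add (H_leR kR) _ _; first lia.
  by apply: keepXR => //; [lia | apply: lwins_raise; rewrite ?wXR].
Qed.

Section KeepsLwins.
Variable X : game.
Hypothesis keepXL : {in leftOpts X, forall x, keeps_lwins H x}.
Hypothesis keepXR : {in rightOpts X, forall x, keeps_lwins H x}.

Lemma keeps_lwinsT p : p <= TB -> lwins TB X p true -> lwins TB (gsub_add H H X) p true.
Proof.
move: p; apply: ltn_ind_down => p le_p IH wX.
have /lwinsP[l le_lp win] := wX.
apply/lwinsP; exists l => // r le_r; move: (win r le_r).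
case: (ltngtP l r) => [lt_lr | lt_rl | eq_lr].
- rewrite !bid_resultT_Rwin // => /allP wXR; apply: all_rightOpts_gsub_add => x xin /=.
  + apply: gge_gsub_add (H_leR xin) _ _; first lia.
    by apply: IH; [lia | exact: lwins_raise].
  + apply: gge_gsub_add (H_geL xin) _ _; first lia.
    by apply: (sc_keeps_lwins (scL xin)); [lia | exact: lwins_raise].
  + by apply: keepXR; rewrite ?wXR //; lia.
- rewrite !bid_resultT_Lwin //; apply: has_leftOpts_gsub_add => x xin.
  by case/orP => wx; apply/orP; [left | right]; apply: keepXL => //; lia.
- rewrite !bid_resultT_tie //; apply: has_leftOpts_gsub_add => x xin wx.
  by apply: keepXL => //; lia.
Qed.

Lemma keeps_lwinsF p : p <= TB -> lwins TB X p false -> lwins TB (gsub_add H H X) p false.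
Proof.
move: p; apply: ltn_ind_down => p le_p IH wX.
have /lwinsP[l le_lp win] := wX.
apply/lwinsP; exists l => // r le_r; move: (win r le_r).
case: (ltngtP l r) => [lt_lr | lt_rl | eq_lr]; last 1 first.
- rewrite !bid_resultF_tie // => /allP wXR.
  have stX : lstable X (p + r) by rewrite /lstable lwins_raise //; apply/allP.
  apply: all_rightOpts_gsub_add => x xin /=.
  + by apply: lwins_revert_rightOpt => //; lia.
  + by apply: revertsL_leftOpt => //; lia.
  + by apply: keepXR; rewrite ?wXR //; lia.
- rewrite !bid_resultF_Rwin // => /allP wXR.
  have stX : lstable X (p + r).
    by rewrite /lstable lwins_raise //; apply/allP => x /wXR /andP[].
  apply: all_rightOpts_gsub_add => x xin /=; apply/andP; split.
  + apply: gge_gsub_add (H_leR xin) _ _; first lia.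
    by apply: IH; [lia | exact: lwins_raise].
  + by apply: lwins_revert_rightOpt => //; lia.
  + apply: gge_gsub_add (H_geL xin) _ _; first lia.
    by apply: (sc_keeps_lwins (scL xin)); [lia | exact: lwins_raise].
  + by apply: revertsL_leftOpt => //; lia.
  + by apply: keepXR => //; [lia | case/andP: (wXR x xin)].
  + by apply: keepXR => //; [lia | case/andP: (wXR x xin)].
- rewrite !bid_resultF_Lwin //; apply: has_leftOpts_gsub_add => x xin wx.
  by apply: keepXL => //; lia.
Qed.

End KeepsLwins.

Lemma keeps_lwins_all X : keeps_lwins H X.
Proof.
elim/game_mem_ind: X => X keepXL keepXR p [] le_p.
- exact: keeps_lwinsT.
- exact: keeps_lwinsF.
Qed.

Lemma revertsR_rightOpt k : k \in rightOpts H -> revertsR H k.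
Proof.
move=> kR X; elim/ltn_ind => q IH le_q stX.
have [nwX /allP nwXL] := andP stX.
apply/lwinsNP => l le_lq; exists 0 => //.
have [->|l_gt0] := posnP l.
  rewrite bid_resultF_tie // addn0 -has_predC; apply/hasP; exists (gsub_add k k X).
    by rewrite rightOpts_gsub_add mem_cat (map_f (fun a => gsub_add a k X)).
  exact: (sc_keeps_lwinsN (scR kR)).
rewrite bid_resultF_Lwin //; apply: hasN_leftOpts_gsub_add => x xin /=.
- apply: ggeN_gsub_add (H_geL xin) _ _; first lia.
  by apply: IH; [lia | lia | exact: rstable_lower].
- apply: ggeN_gsub_add (H_leR kR) _ _; first lia.
  by apply: (sc_revertsR (scR kR)) => //; [lia | exact: rstable_lower].
- apply: ggeN_gsub_add (H_leR kR) _ _; first lia.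
  by apply: (sc_keeps_lwinsN (scR kR)); [lia | apply: lwinsN_lower; rewrite ?nwXL].
Qed.

Lemma lwinsN_revert_leftOpt h X : h \in leftOpts H -> {in leftOpts X, forall x, keeps_lwinsN H x} ->
  forall q, q <= TB -> rstable X q -> ~~ lwins TB (gsub_add h H X) q false.
Proof.
move=> hL keepXL; elim/ltn_ind => q IH le_q stX.
have [nwX /allP nwXL] := andP stX.
apply/lwinsNP => l le_lq; exists 0 => //.
have [->|l_gt0] := posnP l.
  rewrite bid_resultF_tie // addn0 -has_predC; apply/hasP; exists (gsub_add h h X).
    by rewrite rightOpts_gsub_add !mem_cat (map_f (fun b => gsub_add h b X)) ?orbT.
  exact: (sc_keeps_lwinsN (scL hL)).
rewrite bid_resultF_Lwin //; apply: hasN_leftOpts_gsub_add => x xin /=.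
- apply: ggeN_gsub_add (L_geLL hL xin) _ _; first lia.
  by apply: IH; [lia | lia | exact: rstable_lower].
- apply: ggeN_gsub_add (H_geL hL) _ _; first lia.
  by apply: revertsR_rightOpt => //; [lia | exact: rstable_lower].
- apply: ggeN_gsub_add (H_geL hL) _ _; first lia.
  by apply: keepXL => //; [lia | apply: lwinsN_lower; rewrite ?nwXL].
Qed.

Section KeepsLwinsN.
Variable X : game.
Hypothesis keepXL : {in leftOpts X, forall x, keeps_lwinsN H x}.
Hypothesis keepXR : {in rightOpts X, forall x, keeps_lwinsN H x}.

Lemma keeps_lwinsNF p : p <= TB -> ~~ lwins TB X p false -> ~~ lwins TB (gsub_add H H X) p false.
Proof.
elim/ltn_ind: p => p IH le_p /lwinsNP lose.
apply/lwinsNP => l le_lp; have [r le_r nwin] := lose l le_lp; exists r => //; move: nwin.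
case: (ltngtP l r) => [lt_lr | lt_rl | eq_lr].
- rewrite !bid_resultF_Rwin //; apply: notall_rightOpts_gsub_add => x xin.
  by rewrite !negb_and => /orP[] nwx; apply/orP; [left | right]; apply: keepXR => //; lia.
- rewrite !bid_resultF_Lwin // -all_predC => /allP nwXL.
  apply: hasN_leftOpts_gsub_add => x xin /=.
  + apply: ggeN_gsub_add (H_geL xin) _ _; first lia.
    by apply: IH; [lia | lia | apply: lwinsN_lower => //; apply/lwinsNP].
  + apply: ggeN_gsub_add (H_leR xin) _ _; first lia.
    by apply: (sc_keeps_lwinsN (scR xin)); [lia | apply: lwinsN_lower => //; apply/lwinsNP].
  + by apply: keepXL => //; [lia | exact: nwXL].
- rewrite !bid_resultF_tie //; apply: notall_rightOpts_gsub_add => x xin nwx.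
  by apply: keepXR => //; lia.
Qed.

Lemma keeps_lwinsNT p : p <= TB -> ~~ lwins TB X p true -> ~~ lwins TB (gsub_add H H X) p true.
Proof.
elim/ltn_ind: p => p IH le_p nwX; have /lwinsNP lose := nwX.
apply/lwinsNP => l le_lp; have [r le_r nwin] := lose l le_lp; exists r => //; move: nwin.
case: (ltngtP l r) => [lt_lr | lt_rl | eq_lr].
- rewrite !bid_resultT_Rwin //; apply: notall_rightOpts_gsub_add => x xin nwx.
  by apply: keepXR => //; lia.
- rewrite !bid_resultT_Lwin // -all_predC => /allP nwXL.
  have rstX : rstable X (p - l).
    rewrite /rstable lwinsN_lower //=; apply/allP => x /nwXL /=.
    by rewrite negb_or => /andP[].
  apply: hasN_leftOpts_gsub_add => x xin /=; rewrite negb_or; apply/andP; split.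
  + apply: ggeN_gsub_add (H_geL xin) _ _; first lia.
    by apply: IH; [lia | lia | exact: lwinsN_lower].
  + by apply: lwinsN_revert_leftOpt => //; lia.
  + apply: ggeN_gsub_add (H_leR xin) _ _; first lia.
    by apply: (sc_keeps_lwinsN (scR xin)); [lia | exact: lwinsN_lower].
  + by apply: revertsR_rightOpt => //; lia.
  + by apply: keepXL => //; [lia | move: (nwXL x xin); rewrite /= negb_or => /andP[]].
  + by apply: keepXL => //; [lia | move: (nwXL x xin); rewrite /= negb_or => /andP[]].
- rewrite !bid_resultT_tie // -all_predC => /allP nwXL.
  have rstX : rstable X (p - l) by rewrite /rstable lwinsN_lower //=; apply/allP.
  apply: hasN_leftOpts_gsub_add => x xin /=.
  + by apply: lwinsN_revert_leftOpt => //; lia.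
  + by apply: revertsR_rightOpt => //; lia.
  + by apply: keepXL => //; [lia | exact: nwXL].
Qed.

End KeepsLwinsN.

Lemma keeps_lwinsN_all X : keeps_lwinsN H X.
Proof.
elim/game_mem_ind: X => X keepXL keepXR p [] le_p.
- exact: keeps_lwinsNT.
- exact: keeps_lwinsNF.
Qed.

Lemma self_cancelling_step : self_cancelling H.
Proof.
split; [exact: keeps_lwins_all | exact: keeps_lwinsN_all | exact: revertsL_leftOpt
  | exact: revertsR_rightOpt].
Qed.

End Step.
End SelfCancellation.

Section Numbers.
Variable TB : nat.

Lemma is_number_geL H : is_number TB H -> {in leftOpts H, forall h, gge TB H h}.
Proof. by case=> GL GR _ _ ltL _ h /InP /ltL[]. Qed.

Lemma is_number_leR H : is_number TB H -> {in rightOpts H, forall k, gge TB k H}.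
Proof. by case=> GL GR _ _ _ ltR k /InP /ltR[]. Qed.

Lemma number_self_cancelling H : is_number TB H -> self_cancelling TB H.
Proof.
elim=> GL GR nL scL nR scR ltL ltR.
apply: self_cancelling_step => [h /InP /ltL[] | k /InP /ltR[] | h /InP /nL /is_number_geL
  | k /InP /nR /is_number_leR | h /InP /scL | k /InP /scR] //.
Qed.

Lemma lwins_gsub_add_self H X p hat : is_number TB H -> p <= TB ->
  lwins TB (gsub_add H H X) p hat = lwins TB X p hat.
Proof.
move=> /number_self_cancelling[keep keepN _ _] le_p; apply/idP/idP => [w|]; last exact: keep.
exact: contraLR (keepN X p hat le_p) w.
Qed.

Lemma lwins_add_gneg_reassoc A H X p hat :
  lwins TB (gadd (gadd A H) (gadd (gneg H) X)) p hat = lwins TB (gsub_add H H (gadd A X)) p hat.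
Proof.
rewrite /gsub_add gadd_assoc -(gadd_assoc H) (lwins_bisim _ _ _ (bisim_addC _ _)) gadd_assoc.
exact/lwins_bisim/bisim_add/bisim_addC/bisim_refl.
Qed.

Lemma gge_addr A B H : gge TB A B -> gge TB (gadd A H) (gadd B H).
Proof. by move=> geAB X p hat le_p; rewrite /outcome !gadd_assoc; apply: geAB. Qed.

Lemma gge_cancelr A B H : is_number TB H -> gge TB (gadd A H) (gadd B H) -> gge TB A B.
Proof.
move=> nH geABH X p hat le_p; rewrite /outcome -(lwins_gsub_add_self (gadd A X) _ nH le_p).
rewrite -(lwins_gsub_add_self (gadd B X) _ nH le_p) -!lwins_add_gneg_reassoc.
exact: geABH.
Qed.

Lemma gge_bisim A A' B B' : bisim A A' -> bisim B B' -> gge TB A B -> gge TB A' B'.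
Proof.
move=> AA' BB' geAB X p hat le_p; rewrite /outcome.
rewrite -(lwins_bisim _ _ _ (bisim_add AA' (bisim_refl X))).
rewrite -(lwins_bisim _ _ _ (bisim_add BB' (bisim_refl X))).
exact: geAB.
Qed.

Lemma glt_addr A B H : is_number TB H -> glt TB A B -> glt TB (gadd A H) (gadd B H).
Proof. by move=> nH [geBA ngeAB]; split; [exact: gge_addr | move/(gge_cancelr nH)]. Qed.

Lemma glt_addl A B G : is_number TB G -> glt TB A B -> glt TB (gadd G A) (gadd G B).
Proof.
move=> nG /(glt_addr nG)[geBA ngeAB]; split.
  exact: gge_bisim (bisim_addC _ _) (bisim_addC _ _) geBA.
by move/(gge_bisim (bisim_addC _ _) (bisim_addC _ _)).
Qed.

Lemma is_number_intro G :
  {in leftOpts G, forall g, is_number TB g} -> {in rightOpts G, forall g, is_number TB g} ->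
  {in leftOpts G, forall g, glt TB g G} -> {in rightOpts G, forall g, glt TB G g} ->
  is_number TB G.
Proof. by case: G => GL GR nL nR ltL ltR; constructor=> g /InP; auto. Qed.

End Numbers.

Theorem mainTheorem9 (TB : nat) (G H : game) :
  is_number TB G -> is_number TB H -> is_number TB (gadd G H).
Proof.
move=> nG; elim: nG H => GL GR nGL IHGL nGR IHGR ltGL ltGR H nH.
have nG : is_number TB (Game GL GR) by constructor.
elim: nH => HL HR nHL IHHL nHR IHHR ltHL ltHR.
have nH : is_number TB (Game HL HR) by constructor.
apply: is_number_intro => g; rewrite ?leftOpts_gadd ?rightOpts_gadd mem_cat.
all: by case/orP=> /mapP[x /InP xin ->]; auto using glt_addl, glt_addr.
Qed.
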